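(* Every locally Lindelöf, connected, regular space $X$ with $\psi(X)=t(X)=\omega$ has cardinality at most $\mathfrak{c}$.
   Context: $\psi(X)$ denotes pseudocharacter and $t(X)$ tightness. A space is locally Lindelöf if every point has a Lindelöf neighbourhood. *)

From HB Require Import structures.
From mathcomp Require Import all_boot all_order.
From mathcomp Require Import boolp classical_sets functions cardinality.
From mathcomp Require Import topology.
Set Implicit Arguments. Unset Strict Implicit. Unset Printing Implicit Defensive.
Local Open Scope classical_set_scope.

Definition lindelof {T : topologicalType} (K : set T) :=
  forall (I : Type) (U : I -> set T), (forall i, open (U i)) ->
    K `<=` \bigcup_i U i ->
    exists2 J : set I, countable J & K `<=` \bigcup_(i in J) U i.

Definition locally_lindelof (T : topologicalType) :=
  forall x : T, exists2 N : set T, nbhs x N & lindelof N.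

Definition countable_pseudocharacter (T : topologicalType) :=
  forall x : T, exists U : nat -> set T,
    (forall n, open (U n)) /\ \bigcap_n U n = [set x].

Definition countable_tightness (T : topologicalType) :=
  forall (A : set T) (x : T), closure A x ->
    exists2 B : set T, (B `<=` A /\ countable B) & closure B x.

From mathcomp Require Import all_boot all_order.
From mathcomp Require Import boolp classical_sets functions cardinality.
From mathcomp Require Import topology.
Local Open Scope classical_set_scope.

(* Fix a point x0 and close {x0} under two countable operations.  Given a
   sequence s and, for every n, the set of indices i with s i in V y n, where
   the V y n are open neighbourhoods of y whose closures meet in {y} (regularity
   and psi(X) = omega), the first operation returns a point y of the closure of
   the range of s with exactly these traces.  Given s, the second returns a point
   of the Lindelof neighbourhood of s 0 avoiding prescribed V (s i) n.  Every
   point of the resulting hull is the value of a well-founded countably branching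
   tree labelled by reals, so the hull has size at most c.  Countable tightness
   makes the hull closed, the Lindelof neighbourhoods make it open, and by
   connectedness it is the whole space. *)

Section Trees.
Variable L : Type.

Inductive tree := Leaf | Node of (nat -> tree) & L.

Variable lab : L -> set nat.
Hypothesis lab_inj : injective lab.

Fixpoint tree_enc (t : tree) (p : seq nat) (o : option nat) : Prop :=
  match t, p with
  | Leaf, [::] => o = None
  | Leaf, _ :: _ => False
  | Node _ l, [::] => if o is Some n then lab l n else False
  | Node f _, k :: p' => tree_enc (f k) p' o
  end.

Lemma tree_enc_inj : injective tree_enc.
Proof.
elim=> [|f IHf l] [|g l'] // E.
- by have := congr1 (fun e => e [::] None) E => /= E0; exfalso; rewrite -E0.
- by have := congr1 (fun e => e [::] None) E => /= E0; exfalso; rewrite E0.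
have -> : f = g.
  apply/funext => k; apply: IHf; apply/funext => p; apply/funext => o.
  exact: (congr1 (fun e => e (k :: p) o) E).
suff -> : l = l' by [].
by apply/lab_inj/funext => n; exact: (congr1 (fun e => e [::] (Some n)) E).
Qed.

Definition tree_code (t : tree) : set nat :=
  [set m | if unpickle m is Some (p, o) then tree_enc t p o else False].

Lemma tree_code_inj : injective tree_code.
Proof.
move=> t1 t2 E; apply: tree_enc_inj.
apply/funext => p; apply/funext => o.
by move: (congr1 (fun c => c (pickle (p, o))) E); rewrite /tree_code /mkset pickleK.
Qed.

End Trees.

Arguments Leaf {L}.
Arguments Node {L}.
Arguments tree_code {L}.
Arguments tree_code_inj {L lab}.

Lemma card_tree (L : Type) :
  ([set: L] #<= [set: set nat])%card -> ([set: tree L] #<= [set: set nat])%card.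
Proof.
move=> /pcard_injP[lab /in2TT lab_inj]; apply/pcard_injP.
by exists (tree_code lab) => t1 t2 _ _ /(tree_code_inj lab_inj).
Qed.

Definition flagged_family_code (bT : bool * (nat -> set nat)) : set nat :=
  [set m | match unpickle m with
           | Some None => bT.1
           | Some (Some (n, k)) => bT.2 n k
           | None => False
           end].

Lemma card_flagged_family :
  ([set: bool * (nat -> set nat)] #<= [set: set nat])%card.
Proof.
apply/pcard_injP; exists flagged_family_code => -[b T] [b' T'] _ _ E.
have Eat (o : option (nat * nat)) := congr1 (fun c => c (pickle o)) E.
congr pair.
- move: (Eat None); rewrite /flagged_family_code /mkset pickleK /=.
  by move=> /(congr1 asbool); rewrite !asboolb.
- apply/funext => n; apply/funext => k.
  by move: (Eat (Some (n, k))); rewrite /flagged_family_code /mkset pickleK.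
Qed.

Lemma countableU (T : Type) (A B : set T) :
  countable A -> countable B -> countable (A `|` B).
Proof. by move=> cA cB; rewrite -bigcup2E; apply: bigcup_countable => // -[|[|]]. Qed.

Lemma countable_nonempty_range {T : Type} {B : set T} :
  countable B -> B !=set0 -> exists s : nat -> T, B = range s.
Proof.
move=> /pfcard_geP[->|]; first by case.
by move=> /surjfunPex[s ->]; exists s.
Qed.

Section Saturation.
Variables (X : topologicalType) (x0 : X).
Variable V : X -> nat -> set X.
Hypotheses (V_open : forall x n, open (V x n)) (V_center : forall x n, V x n x).
Hypothesis closure_V_eq : forall x y, (forall n, closure (V x n) y) -> y = x.
Variable N : X -> set X.
Hypotheses (N_nbhs : forall x, nbhs x (N x)) (N_lindelof : forall x, lindelof (N x)).
Hypothesis tightX : countable_tightness X.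

Lemma V_separates x y : y <> x -> exists n, ~ V x n y.
Proof.
move=> yx; apply: contrapT => /forallNP noV; apply: yx; apply: closure_V_eq => n.
by apply: subset_closure; apply: contrapT; exact: noV.
Qed.

Definition closure_point (s : nat -> X) (T : nat -> set nat) : X :=
  xget x0 [set y | closure (range s) y /\ forall n, [set i | V y n (s i)] = T n].

Definition escape_point (s : nat -> X) (T : nat -> set nat) : X :=
  xget x0 [set q | N (s 0) q /\ forall i n, T i n -> ~ V (s i) n q].

Lemma closure_pointP s T y :
  closure (range s) y -> (forall n, [set i | V y n (s i)] = T n) ->
  let z := closure_point s T in
  closure (range s) z /\ forall n, [set i | V z n (s i)] = T n.
Proof.
move=> cly VyT z; exact: (@xgetI _ x0
  [set z | closure (range s) z /\ forall n, [set i | V z n (s i)] = T n] y (conj cly VyT)).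
Qed.

Lemma escape_pointP s T p :
  N (s 0) p -> (forall i n, T i n -> ~ V (s i) n p) ->
  let q := escape_point s T in
  N (s 0) q /\ forall i n, T i n -> ~ V (s i) n q.
Proof.
move=> Np VpT q; exact: (@xgetI _ x0
  [set q | N (s 0) q /\ forall i n, T i n -> ~ V (s i) n q] p (conj Np VpT)).
Qed.

Fixpoint tree_point (t : tree (bool * (nat -> set nat))) : X :=
  match t with
  | Leaf => x0
  | Node f (b, T) =>
      (if b then closure_point else escape_point) (fun i => tree_point (f i)) T
  end.

Definition hull : set X := range tree_point.

Lemma hull_node (b : bool) (s : nat -> X) (T : nat -> set nat) :
  (forall i, hull (s i)) ->
  hull ((if b then closure_point else escape_point) s T).
Proof.
move=> s_hull; have s_pre i : exists t, tree_point t = s i.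
  by have [t _ ts] := s_hull i; exists t.
have [f fE] := choice s_pre.
by exists (Node f (b, T)) => //=; rewrite (funext fE).
Qed.

Lemma hull_closed : closed hull.
Proof.
move=> x /tightX[B [B_hull B_count] clBx].
have [|s Bs] := countable_nonempty_range B_count.
  by apply/set0P/negP => /eqP B0; move: clBx; rewrite B0 closure0.
subst B; pose T n := [set i | V x n (s i)].
(* A point with the same V-traces on s as x lies in every closure of V x n. *)
suff <- : closure_point s T = x by apply: (hull_node true) => i; apply: B_hull; exists i.
have [cly clyT] := closure_pointP s T x clBx (fun=> erefl).
apply: closure_V_eq => n C /(filterI (open_nbhs_nbhs (conj (V_open _ n) (V_center _ n)))).
move=> /cly[_ [[i _ <-] [Vi Ci]]]; exists (s i); split => //.
by have : T n i by rewrite -clyT.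
Qed.

Lemma hull_nbhs x : hull x -> N x `<=` hull.
Proof.
(* If p in N x escaped the hull, pick for every hull point y some V y (m y)
   missing p; a countable subcover then yields an escape point in the hull
   that no member of the subcover contains. *)
move=> hull_x p Np; apply: contrapT => hull_p.
have m_ex y : exists n, hull y -> ~ V y n p.
  have [hull_y|] := pselect (hull y); last by exists 0.
  have [n Vn] : exists n, ~ V y n p.
    by apply: V_separates => py; apply: hull_p; rewrite py.
  by exists n.
have [m Vm] := choice m_ex.
pose U y := if pselect (hull y) then V y (m y) else ~` hull.
have U_open y : open (U y).
  by rewrite /U; case: pselect => ?; [exact: V_open | exact: closed_openC hull_closed].
have N_U : N x `<=` \bigcup_y U y.
  move=> z _; exists z => //; rewrite /U.
  by case: pselect => // ?; exact: V_center.
have [J J_count NJ] := N_lindelof x _ U U_open N_U.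
have [s s_range] : exists s : nat -> X, J `&` hull `|` [set x] = range s.
  apply: countable_nonempty_range; last by exists x; right.
  apply: countableU; last exact: countable1.
  by apply: sub_countable J_count; apply: subset_card_le; apply: subIsetl.
pose s' i := if i is i'.+1 then s i' else x.
have s'_hull i : hull (s' i).
  case: i => [|i] //=; have : range s (s i) by exists i.
  by rewrite -s_range => -[[]|->].
pose q := escape_point s' (fun i => [set m (s' i)]).
have p_escapes i n : [set m (s' i)] n -> ~ V (s' i) n p by move=> ->; exact: Vm.
have [Nq qV] := escape_pointP s' (fun i => [set m (s' i)]) p Np p_escapes.
have [j Jj Ujq] := NJ q Nq.
have hull_q : hull q by exact: (hull_node false).
move: Ujq; rewrite /U; case: pselect => // hull_j Vjq.
have [i _ sij] : range s j by rewrite -s_range; left.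
by apply: (qV i.+1 (m j)); rewrite /= sij.
Qed.

Lemma hull_open : open hull.
Proof. by rewrite openE => x /hull_nbhs/filterS; apply. Qed.

Lemma hull_setT : connected [set: X] -> hull = setT.
Proof.
move=> conX; apply: conX.
- by exists x0, Leaf.
- by exists hull; [exact: hull_open | rewrite setTI].
- by exists hull; [exact: hull_closed | rewrite setTI].
Qed.

End Saturation.

Lemma regular_closed_pseudobase {X : topologicalType} :
  regular_space X -> countable_pseudocharacter X ->
  forall x : X, exists V : nat -> set X,
    [/\ forall n, open (V n), forall n, V n x &
        forall y, (forall n, closure (V n) y) -> y = x].
Proof.
move=> regX psiX x; have [U [U_open U_x]] := psiX x.
have W_ex n : exists W : set X, [/\ open W, W x & closure W `<=` U n].
  have U_nx : (\bigcap_n U n) x by rewrite U_x.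
  have /regX[C C_x clCU] : nbhs x (U n).
    by apply: open_nbhs_nbhs; split; [exact: U_open | exact: U_nx].
  exists C°; split; [exact: open_interior | exact: C_x |].
  by apply: subset_trans clCU; apply: closureS; exact: interior_subset.
have [W W_spec] := choice W_ex.
exists W; split=> [n|n|y clWy]; try by case: (W_spec n).
suff : (\bigcap_n U n) y by rewrite U_x.
by move=> n _; have [_ _] := W_spec n; apply; exact: clWy.
Qed.

Theorem mainTheorem13 (X : topologicalType) :
  locally_lindelof X -> connected [set: X] -> regular_space X ->
  countable_pseudocharacter X -> countable_tightness X ->
  ([set: X] #<= [set: set nat])%card.
Proof.
move=> LL conX regX psiX tightX.
have [[x0 _]|X0] := pselect (exists x : X, True); last first.
  by apply/pfcard_geP; left; apply/seteqP; split=> // x; case: X0; exists x.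
have [V V_spec] := choice (regular_closed_pseudobase regX psiX).
have N_ex (x : X) : exists N : set X, nbhs x N /\ lindelof N.
  by have [N ? ?] := LL x; exists N.
have [N N_spec] := choice N_ex.
have V_open x n : open (V x n) by case: (V_spec x).
have V_center x n : V x n x by case: (V_spec x).
have closure_V_eq x y : (forall n, closure (V x n) y) -> y = x.
  by case: (V_spec x) => _ _; apply.
have N_nbhs (x : X) : nbhs x (N x) by case: (N_spec x).
have N_lindelof x : lindelof (N x) by case: (N_spec x).
have hullT := @hull_setT _ x0 _ V_open V_center closure_V_eq _ N_nbhs N_lindelof tightX conX.
apply: card_le_trans; last exact: card_tree card_flagged_family.
by apply/pfcard_geP; right; apply/surjfunPex; exists (tree_point X x0 V N); rewrite -hullT.
Qed.
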